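(* Let $p(m,n)$, for integers $m,n\ge 0$ with $m+n>0$, be the unique function satisfying the recurrence $$p(m,n)=\frac{n}{m+n}\,p(m-1,n)+\frac{m}{m+n}\,p(m,n-1)\qquad (m>0,\ n>0)$$ with boundary conditions $p(m,0)=0$ for $m>0$ and $p(0,n)=1$ for $n>0$. Then for all integers $m\ge 0$, $n\ge 0$ with $m+n>0$, $$p(m,n)=\sum_{j=0}^{n}\frac{(-1)^j}{j!}\,\frac{(n-j)^{m+n}}{(m+n-j)!}.$$
   Context: ''War of ruins'': two armies A and B start with $m$ and $n$ soldiers. At each discrete step, while both are positive, with probability $m/(m+n)$ army B loses one soldier ($(m,n)\to(m,n-1)$) and with probability $n/(m+n)$ army A loses one soldier ($(m,n)\to(m-1,n)$). $p(m,n)$ is the probability that army A is reduced to $0$ soldiers before army B is; it is characterized by the recurrence and boundary conditions stated in the claim. *)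

From HB Require Import structures.
From mathcomp Require Import all_boot all_order all_algebra.
Set Implicit Arguments. Unset Strict Implicit. Unset Printing Implicit Defensive.
Import Order.TTheory GRing.Theory Num.Theory.
Local Open Scope ring_scope.

Definition war_of_ruins (p : nat -> nat -> rat) : Prop :=
  [/\ (forall m n : nat, (0 < m)%N -> (0 < n)%N ->
        p m n = (n%:R / (m + n)%:R) * p m.-1 n + (m%:R / (m + n)%:R) * p m n.-1),
      (forall m : nat, (0 < m)%N -> p m 0%N = 0)
    & (forall n : nat, (0 < n)%N -> p 0%N n = 1)].

(* The right-hand side satisfies the recurrence term by term: after the
   index shift j -> j + 1 in the m-term, the j-th summands of
   n p(m-1,n) + m p(m,n-1) add up to (m + n) times the j-th summand of
   p(m,n).  The boundary value at n = 0 is immediate, and the one at m = 0 is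
   the classical identity sum_j (-1)^j C(n,j) (n-j)^n = n!, i.e. the n-th
   finite difference of x^n.  The recurrence determines p by induction on
   m + n. *)
From HB Require Import structures.
From mathcomp Require Import all_boot all_order all_algebra.
From mathcomp Require Import zify ring.
Import Order.TTheory GRing.Theory Num.Theory.
Local Open Scope ring_scope.

Lemma war_of_ruins_unique (p q : nat -> nat -> rat) :
  war_of_ruins p -> war_of_ruins q ->
  forall m n : nat, (0 < m + n)%N -> p m n = q m n.
Proof.
move=> [prec p0 p1] [qrec q0 q1] m n.
elim: {m n}(m + n)%N {-2}m {-2}n (erefl (m + n)%N) => [|s IHs] m n mn_eq mn_gt0.
  by rewrite mn_eq in mn_gt0.
case: m mn_eq mn_gt0 => [|m] mn_eq mn_gt0; first by rewrite p1 ?q1.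
case: n mn_eq mn_gt0 => [|n] mn_eq mn_gt0; first by rewrite p0 ?q0.
by rewrite prec // qrec // /= !IHs //; lia.
Qed.

Section FiniteDifference.
Variable R : comNzRingType.

Definition fdiff_pow (n k : nat) : R :=
  \sum_(j < n.+1) (-1) ^+ j * 'C(n, j)%:R * (n - j)%N%:R ^+ k.

Lemma fdiff_powS0 n : fdiff_pow n.+1 0 = 0.
Proof.
have := exprD1n (-1 : R) n.+1; rewrite addNr exprS mul0r => ->.
by apply: eq_bigr => j _; rewrite expr0 mulr1 mulr_natr.
Qed.

Lemma fdiff_powSS n k :
  fdiff_pow n.+1 k.+1 = n.+1%:R * \sum_(l < k.+1) 'C(k, l)%:R * fdiff_pow n l.
Proof.
rewrite /fdiff_pow big_ord_recr /= subnn expr0n /= mulr0 addr0.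
have summandE (j : 'I_n.+1) : (-1) ^+ j * 'C(n.+1, j)%:R * (n.+1 - j)%N%:R ^+ k.+1
    = n.+1%:R * ((-1) ^+ j * 'C(n, j)%:R * ((n - j)%N%:R + 1) ^+ k) :> R.
  have le_jn : (j <= n)%N by rewrite -ltnS.
  have := mul_bin_down n.+1 j; rewrite /= !subSn //; set d := (n - j)%N => binE.
  rewrite natr1 exprS.
  transitivity ((-1) ^+ j * ('C(n.+1, j) * d.+1)%:R * d.+1%:R ^+ k : R).
    by rewrite natrM; ring.
  by rewrite mulnC -binE natrM; ring.
under eq_bigr => j _ do rewrite summandE exprD1n mulr_sumr.
rewrite -mulr_sumr exchange_big; congr (_ * _); apply: eq_bigr => l _.
by rewrite mulr_sumr; apply: eq_bigr => j _; rewrite mulrnAr -mulr_natl; ring.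
Qed.

Lemma fdiff_pow_lt n k : (k < n)%N -> fdiff_pow n k = 0.
Proof.
elim: n k => // n IHn [_|k lt_kn]; first exact: fdiff_powS0.
rewrite fdiff_powSS big1 ?mulr0 // => l _.
by rewrite IHn ?mulr0 // (leq_trans (ltn_ord l)).
Qed.

Lemma fdiff_pow_diag n : fdiff_pow n n = n`!%:R.
Proof.
elim: n => [|n IHn]; first by rewrite /fdiff_pow big_ord1 /= !mulr1.
rewrite fdiff_powSS big_ord_recr /= big1 => [|l _]; last first.
  by rewrite fdiff_pow_lt ?mulr0.
by rewrite add0r binn mul1r IHn factS natrM.
Qed.

End FiniteDifference.

Section Formula.
Variable R : numFieldType.

Lemma natr_fact_neq0 k : k`!%:R != 0 :> R.
Proof. by rewrite pnatr_eq0 -lt0n fact_gt0. Qed.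

Definition war_formula (m n : nat) : R :=
  \sum_(0 <= j < n.+1)
    ((-1) ^+ j / (j`!)%:R) * (((n - j)%N%:R ^+ (m + n)) / ((m + n - j)`!)%:R).

Lemma war_formula_m0 m : (0 < m)%N -> war_formula m 0 = 0.
Proof.
case: m => // m _.
by rewrite /war_formula big_nat1 addn0 sub0n expr0n /= mul0r mulr0.
Qed.

Lemma war_formula_0n n : war_formula 0 n = 1.
Proof.
rewrite -(divff (natr_fact_neq0 n)) -[X in X / _](fdiff_pow_diag R n).
rewrite /war_formula /fdiff_pow big_mkord mulr_suml; apply: eq_bigr => j _.
have le_jn : (j <= n)%N by rewrite -ltnS.
have binE : 'C(n, j)%:R = n`!%:R / (j`!%:R * (n - j)`!%:R) :> R.
  by rewrite -(bin_fact le_jn) !natrM mulfK // mulf_neq0 ?natr_fact_neq0.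
by rewrite binE add0n; field; rewrite !natr_fact_neq0.
Qed.

(* war_formula m.+1 n reindexed by j -> j + 1, using 1/(j-1)! = j/j!; the
   added j = 0 summand vanishes. *)
Lemma war_formula_shift m n : war_formula m.+1 n = \sum_(0 <= j < n.+2)
  - ((-1) ^+ j * j%:R / (j`!)%:R)
    * ((n.+1 - j)%N%:R ^+ (m + n.+1) / ((m.+1 + n.+1 - j)`!)%:R).
Proof.
rewrite big_nat_recl // mulr0n mulr0 mul0r oppr0 mul0r add0r.
apply: eq_big_nat => j _.
rewrite subSS [(m.+1 + n.+1)%N]addnS subSS -addSnnS factS natrM exprS.
have jS_neq0 : j.+1%:R != 0 :> R by rewrite pnatr_eq0.
by field; rewrite !natr_fact_neq0 addrC natr1 jS_neq0.
Qed.

Lemma war_formula_rec m n :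
  (m.+1 + n.+1)%:R * war_formula m.+1 n.+1
    = n.+1%:R * war_formula m n.+1 + m.+1%:R * war_formula m.+1 n.
Proof.
rewrite [war_formula m.+1 n]war_formula_shift /war_formula !mulr_sumr -big_split /=.
apply: eq_big_nat => j /andP[_ le_jn].
have [d nE] : {d | n.+1 = j + d}%N by exists (n.+1 - j)%N; rewrite subnKC.
have -> : (n.+1 - j = d)%N by rewrite nE addKn.
have -> : (m.+1 + n.+1 - j = (m + d).+1)%N by rewrite nE; lia.
have -> : (m + n.+1 - j = m + d)%N by rewrite nE; lia.
rewrite nE factS addSn exprS -[(m + d).+1]addn1 !natrM -!natr1 !natrD.
have md1_neq0 : m%:R + d%:R + 1 != 0 :> R by rewrite -natrD natr1 pnatr_eq0.
by field; rewrite !natr_fact_neq0 md1_neq0.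
Qed.

End Formula.

Lemma war_formula_war_of_ruins : war_of_ruins (war_formula rat).
Proof.
split=> [[|m] [|n] // _ _ | m /war_formula_m0 // | n _]; last exact: war_formula_0n.
have mn_neq0 : (m.+1 + n.+1)%:R != 0 :> rat by rewrite pnatr_eq0 addnS.
apply: (mulfI mn_neq0); rewrite war_formula_rec /=.
by field; rewrite !(addrC 1) !natr1 -natrD.
Qed.

Theorem proposition1 (p : nat -> nat -> rat) :
  war_of_ruins p ->
  forall m n : nat, (0 < m + n)%N ->
    p m n = \sum_(0 <= j < n.+1)
              ((-1) ^+ j / (j`!)%:R) * (((n - j)%N%:R ^+ (m + n)) / ((m + n - j)`!)%:R).
Proof.
move=> p_war m n mn_gt0.
exact: war_of_ruins_unique p_war war_formula_war_of_ruins m n mn_gt0.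
Qed.
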